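(* Let $\pi$ be a positive (smooth) density on $\mathbb{R}^d$ and $\alpha,\beta>0$. Consider $$\text{(HK-KL)}\quad \dot\mu=\alpha\,\mathrm{div}\Big(\nabla\mu-\tfrac{\mu}{\pi}\nabla\pi\Big)-\beta\mu\log\Big(\tfrac{\mu}{\pi}\Big),$$ $$\text{(SHK-KL)}\quad \dot\rho=\alpha\,\mathrm{div}\Big(\nabla\rho-\tfrac{\rho}{\pi}\nabla\pi\Big)-\beta\rho\Big(\log\Big(\tfrac{\rho}{\pi}\Big)-\int_{\mathbb{R}^d}\rho\log\Big(\tfrac{\rho}{\pi}\Big)dx\Big).$$ (i) If $t\mapsto\mu(t)$ solves (HK-KL), then $t\mapsto\rho(t)=\frac{1}{z(t)}\mu(t)$ with $z(t)=\int_{\mathbb{R}^d}\mu(t,x)\,dx>0$ solves (SHK-KL), and $z$ satisfies the mass equation $$\dot z=-\beta z\log z-\beta z\int_{\mathbb{R}^d}\rho\log\Big(\tfrac{\rho}{\pi}\Big)dx.\qquad(\text{Mass-HK})$$ (ii) Conversely, if $t\mapsto\rho(t)$ (probability densities) solves (SHK-KL) and $\kappa$ is a positive solution of (Mass-HK) (with $z$ replaced by $\kappa$ and this $\rho$), then $t\mapsto\mu(t)=\kappa(t)\rho(t)$ solves (HK-KL); here $\kappa$ does not depend on $x$.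
   Context: Solutions are understood as classical solutions with sufficient decay at infinity so that integrals over $\mathbb{R}^d$ of the divergence terms vanish. (HK-KL) and (SHK-KL) are the Hellinger-Kantorovich and spherical Hellinger-Kantorovich gradient-flow equations of the KL divergence $\mathrm{D}_{\mathrm{KL}}(\cdot|\pi)$. *)

From HB Require Import structures.
From mathcomp Require Import all_boot all_order all_algebra.
From mathcomp Require Import all_classical all_reals all_analysis.
Set Implicit Arguments. Unset Strict Implicit. Unset Printing Implicit Defensive.
Import Order.TTheory GRing.Theory Num.Theory.
Import numFieldNormedType.Exports.
Local Open Scope classical_set_scope.
Local Open Scope ring_scope.

Section HKdefs.
Variables (R : realType) (d : nat).

Notation V := 'rV[R]_d.

Definition box (a b : V) : set V := [set x | forall i, a 0 i <= x 0 i <= b 0 i].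
Definition boxes : set (set V) := [set box ab.1 ab.2 | ab in [set: V * V]].

Definition Rd : Type := g_sigma_algebraType boxes.

(* lam is the Lebesgue measure on R^d: the volume of every box is the
   product of its side lengths (this characterizes Lebesgue measure on the
   Borel sigma-algebra). *)
Definition is_lebesgue (lam : {measure set Rd -> \bar R}) : Prop :=
  forall a b : V, (forall i, a 0 i <= b 0 i) ->
    lam (box a b) = (\prod_(i < d) (b 0 i - a 0 i))%:E.

Definition intRd (lam : {measure set Rd -> \bar R}) (f : V -> R) : R :=
  Rintegral lam [set: Rd] f.

Definition integrableRd (lam : {measure set Rd -> \bar R}) (f : V -> R) : Prop :=
  lam.-integrable [set: Rd] (fun x => (f x)%:E).

Definition evec (i : 'I_d) : V := delta_mx 0 i.
Definition partial (i : 'I_d) (f : V -> R) (x : V) : R := 'D_(evec i) f x.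
Definition grad (f : V -> R) (x : V) : V := \row_i partial i f x.
Definition divg (F : V -> V) (x : V) : R := \sum_(i < d) partial i (fun y => F y 0 i) x.

Definition flux (pi f : V -> R) : V -> V :=
  fun x => grad f x - (f x / pi x) *: grad pi x.

Definition KLint (lam : {measure set Rd -> \bar R}) (pi f : V -> R) : R :=
  intRd lam (fun x => f x * ln (f x / pi x)).

Definition solves_HK (alpha beta : R) (pi : V -> R) (I : set R) (mu : R -> V -> R) : Prop :=
  forall t, I t -> forall x : V,
    is_derive t 1 (fun s => mu s x)
      (alpha * divg (flux pi (mu t)) x - beta * mu t x * ln (mu t x / pi x)).

Definition solves_SHK (lam : {measure set Rd -> \bar R}) (alpha beta : R) (pi : V -> R)
    (I : set R) (rho : R -> V -> R) : Prop :=
  forall t, I t -> forall x : V,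
    is_derive t 1 (fun s => rho s x)
      (alpha * divg (flux pi (rho t)) x
       - beta * rho t x * (ln (rho t x / pi x) - KLint lam pi (rho t))).

Definition solves_mass (lam : {measure set Rd -> \bar R}) (beta : R) (pi : V -> R)
    (I : set R) (rho : R -> V -> R) (z : R -> R) : Prop :=
  forall t, I t ->
    is_derive t 1 z (- beta * z t * ln (z t) - beta * z t * KLint lam pi (rho t)).

Definition classical_density (pi : V -> R) (I : set R) (f : R -> V -> R) : Prop :=
  forall t, I t ->
    (forall x, 0 < f t x) /\
    (forall x, differentiable (f t) x) /\
    (forall x (i : 'I_d), differentiable (fun y => flux pi (f t) y 0 i) x).

(* Standing solution concept of the paper: classical solutions with sufficient
   decay/integrability at infinity: the density and its entropy density are
   integrable, the divergence term is integrable with vanishing integral, and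
   the total mass may be differentiated under the integral sign. *)
Definition decaying_density (lam : {measure set Rd -> \bar R}) (pi : V -> R)
    (I : set R) (f : R -> V -> R) : Prop :=
  classical_density pi I f /\
  forall t, I t ->
    [/\ integrableRd lam (f t),
        integrableRd lam (fun x => f t x * ln (f t x / pi x)),
        integrableRd lam (divg (flux pi (f t))),
        intRd lam (divg (flux pi (f t))) = 0 &
        is_derive t 1 (fun s => intRd lam (f s))
          (intRd lam (fun x => 'D_1 (fun s => f s x) t))].

End HKdefs.

(* Both directions are pointwise computations with the product rule, resting on
   two facts: the HK operator commutes with multiplication by a spatially
   constant factor except for its reaction term, where
   log (c f / pi) = log c + log (f / pi); and integrating (HK-KL) over R^d kills
   the divergence term, so the mass z = int mu obeys z' = -beta int mu log (mu / pi).
   Writing int rho log (rho / pi) = (int mu log (mu / pi)) / z - log z for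
   rho = mu / z turns this into (Mass-HK), and the quotient rule for mu / z then
   gives (SHK-KL).  Conversely, the product rule for kappa rho recombines
   (SHK-KL) and (Mass-HK) into (HK-KL). *)
From HB Require Import structures.
From mathcomp Require Import all_boot all_order all_algebra.
From mathcomp Require Import all_classical all_reals all_analysis.
From mathcomp Require Import ring.
Import Order.TTheory GRing.Theory Num.Theory.
Import numFieldNormedType.Exports.
Local Open Scope classical_set_scope.
Local Open Scope ring_scope.

Lemma ln_div_scale (R : realType) (a c p : R) :
  0 < a -> 0 < c -> 0 < p -> ln (a / c / p) = ln (a / p) - ln c.
Proof.
move=> a_gt0 c_gt0 p_gt0.
by rewrite mulrAC [LHS]lnM ?lnV ?posrE ?divr_gt0 ?invr_gt0.
Qed.

Section IntegralsOverRd.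
Context {R : realType} {d : nat} {lam : {measure set Rd R d -> \bar R}}.

Lemma integrableRdZl (a : R) (f : 'rV[R]_d -> R) :
  integrableRd lam f -> integrableRd lam (fun x => a * f x).
Proof.
move=> f_int; apply: (eq_integrable measurableT _ _ _ (integrableZl measurableT a f_int)).
by move=> x _; rewrite EFinM.
Qed.

Lemma intRd_lincomb (a b : R) (f g : 'rV[R]_d -> R) :
  integrableRd lam f -> integrableRd lam g ->
  intRd lam (fun x => a * f x + b * g x) = a * intRd lam f + b * intRd lam g.
Proof.
move=> f_int g_int; rewrite /intRd RintegralD ?RintegralZl //.
- exact: integrableRdZl f_int.
- exact: integrableRdZl g_int.
Qed.

Lemma is_lebesgue_setT_neq0 : is_lebesgue lam -> lam [set: Rd R d] != 0%E.
Proof.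
move=> lebesgue; set unit_box := box (0 : 'rV[R]_d) (const_mx 1).
have box_meas : measurable (unit_box : set (Rd R d)).
  by apply: sub_gen_smallest; exists (0, const_mx 1).
have box_vol : lam unit_box = 1%E.
  rewrite lebesgue => [|i]; last by rewrite !mxE ler01.
  rewrite (eq_bigr (fun=> 1)) ?prodr_const ?expr1n // => i _.
  by rewrite !mxE subr0.
apply/negP => /eqP lam_setT0.
have := eq_trans (esym box_vol) (subset_measure0 box_meas measurableT (@subsetT _ _) lam_setT0).
by move=> /eqP; rewrite eqe oner_eq0.
Qed.

(* A positive function vanishes nowhere, so the null set off which it vanishes
   must be all of R^d. *)
Lemma intRd_gt0 (f : 'rV[R]_d -> R) :
  lam [set: Rd R d] != 0%E -> integrableRd lam f -> (forall x, 0 < f x) ->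
  0 < intRd lam f.
Proof.
move=> lam_neq0 f_int f_gt0; have /integrableP[f_meas _] := f_int.
rewrite lt0r Rintegral_ge0 ?andbT => [|x _]; last exact: ltW.
apply/negP => /eqP int0.
have abs_int0 : (\int[lam]_(x in [set: Rd R d]) `|(f x)%:E|)%E = 0%E.
  transitivity (\int[lam]_(x in [set: Rd R d]) (f x)%:E)%E.
    by apply: eq_integral => x _; rewrite gee0_abs // lee_fin ltW.
  by rewrite -(fineK (integrable_fin_num measurableT f_int)) -[fine _]/(intRd lam f) int0.
have [N [N_meas N0 fN]] := (ae_eq_integral_abs lam measurableT f_meas).1 abs_int0.
move/negP: lam_neq0; apply; apply/eqP.
apply: (subset_measure0 measurableT N_meas _ N0) => x _.
by apply: fN => /= /(_ I) /eqP; rewrite eqe gt_eqF.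
Qed.

End IntegralsOverRd.

Section ConstantScaling.
Context {R : realType} {d : nat}.

Lemma partialZ (f : 'rV[R]_d -> R) (c : R) (i : 'I_d) (x : 'rV[R]_d) :
  differentiable f x -> partial i (fun y => c * f y) x = c * partial i f x.
Proof.
move=> f_diff; rewrite /partial -[fun y => c * f y]/(c \*: f).
by rewrite deriveZ //; exact: diff_derivable.
Qed.

Lemma flux_scale (pi f : 'rV[R]_d -> R) (c : R) :
  (forall x, differentiable f x) ->
  flux pi (fun y => c * f y) = fun x => c *: flux pi f x.
Proof.
move=> f_diff; apply/funext => x; rewrite /flux.
have -> : grad (fun y => c * f y) x = c *: grad f x.
  by apply/rowP => i; rewrite !mxE partialZ.
by rewrite scalerBr scalerA mulrA.
Qed.

Lemma divgZ (F : 'rV[R]_d -> 'rV[R]_d) (c : R) (x : 'rV[R]_d) :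
  (forall i, differentiable (fun y => F y 0 i) x) ->
  divg (fun y => c *: F y) x = c * divg F x.
Proof.
move=> F_diff; rewrite /divg mulr_sumr; apply: eq_bigr => i _.
by rewrite -partialZ //; congr partial; apply/funext => y; rewrite mxE.
Qed.

Lemma divg_flux_scale (pi f : 'rV[R]_d -> R) (c : R) (x : 'rV[R]_d) :
  (forall x, differentiable f x) ->
  (forall i, differentiable (fun y => flux pi f y 0 i) x) ->
  divg (flux pi (fun y => c * f y)) x = c * divg (flux pi f) x.
Proof. by move=> f_diff flux_diff; rewrite flux_scale // divgZ. Qed.

End ConstantScaling.

Section HellingerKantorovich.
Context {R : realType} {d : nat} {lam : {measure set Rd R d -> \bar R}}.
Context {alpha beta : R} {I : set R} { pi : 'rV[R]_d -> R}.
Hypothesis pi_gt0 : forall x, 0 < pi x.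

Lemma KLint_scale (f : 'rV[R]_d -> R) (c : R) :
  0 < c -> (forall x, 0 < f x) ->
  integrableRd lam f -> integrableRd lam (fun x => f x * ln (f x / pi x)) ->
  KLint lam pi (fun x => f x / c) = (KLint lam pi f - ln c * intRd lam f) / c.
Proof.
move=> c_gt0 f_gt0 f_int entropy_int; rewrite /KLint; have c_neq0 : c != 0 by rewrite gt_eqF.
have -> : (fun x => f x / c * ln (f x / c / pi x)) =
    fun x => c^-1 * (f x * ln (f x / pi x)) + (- (ln c / c)) * f x.
  by apply/funext => x; rewrite ln_div_scale //; ring.
by rewrite intRd_lincomb //; field.
Qed.

Lemma scaled_SHK_solves_HK (rho : R -> 'rV[R]_d -> R) (kappa : R -> R) :
  classical_density pi I rho -> solves_SHK lam alpha beta pi I rho ->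
  (forall t, I t -> 0 < kappa t) -> solves_mass lam beta pi I rho kappa ->
  solves_HK alpha beta pi I (fun t x => kappa t * rho t x).
Proof.
move=> rho_classical rho_SHK kappa_gt0 kappa_mass t It x.
have [rho_gt0 [rho_diff flux_diff]] := rho_classical t It.
apply: is_derive_eq (is_deriveM (kappa_mass t It) (rho_SHK t It x)) _.
have ln_split : ln (kappa t * rho t x / pi x) = ln (kappa t) + ln (rho t x / pi x).
  by rewrite -mulrA lnM ?posrE ?divr_gt0 ?kappa_gt0.
by rewrite divg_flux_scale // ln_split /GRing.scale /=; ring.
Qed.

Section NormalizedSolution.
Context {mu : R -> 'rV[R]_d -> R}.
Hypotheses (lam_neq0 : lam [set: Rd R d] != 0%E)
  (mu_decay : decaying_density lam pi I mu) (mu_HK : solves_HK alpha beta pi I mu).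

Local Notation z := (fun t => intRd lam (mu t)).
Local Notation rho := (fun t x => mu t x / intRd lam (mu t)).

Let mu_classical : classical_density pi I mu := proj1 mu_decay.
Let mu_decay_at t (It : I t) := proj2 mu_decay t It.

Lemma total_mass_gt0 t : I t -> 0 < z t.
Proof.
move=> It; have [mu_int _ _ _ _] := mu_decay_at t It.
by apply: intRd_gt0 => //; case: (mu_classical t It).
Qed.

Lemma is_derive_total_mass t : I t -> is_derive t 1 z (- beta * KLint lam pi (mu t)).
Proof.
move=> It; have [mu_int entropy_int div_int div0 z_deriv] := mu_decay_at t It.
have D_mu : (fun x => 'D_1 (fun s => mu s x) t) =
    fun x => alpha * divg (flux pi (mu t)) x + (- beta) * (mu t x * ln (mu t x / pi x)).
  by apply/funext => x; have mu_deriv := mu_HK t It x; rewrite derive_val; ring.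
by move: z_deriv; rewrite D_mu intRd_lincomb // div0 mulr0 add0r.
Qed.

Lemma KLint_normalized t : I t -> KLint lam pi (rho t) = KLint lam pi (mu t) / z t - ln (z t).
Proof.
move=> It; have [mu_int entropy_int _ _ _] := mu_decay_at t It.
have [mu_gt0 _] := mu_classical t It.
have z_neq0 : z t != 0 by rewrite gt_eqF ?total_mass_gt0.
by rewrite KLint_scale ?total_mass_gt0 //; field.
Qed.

Lemma normalized_HK_solves_SHK : solves_SHK lam alpha beta pi I rho.
Proof.
move=> t It x; have [mu_gt0 [mu_diff flux_diff]] := mu_classical t It.
have z_gt0 := total_mass_gt0 t It; have z_neq0 : z t != 0 by rewrite gt_eqF.
apply: is_derive_eq (is_deriveM (mu_HK t It x) (is_deriveV z_neq0 (is_derive_total_mass t It))) _.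
rewrite KLint_normalized //.
have -> : rho t = fun y => (z t)^-1 * mu t y by apply/funext => y; rewrite mulrC.
rewrite divg_flux_scale // mulrC ln_div_scale //.
by rewrite /GRing.scale /=; field.
Qed.

Lemma total_mass_solves_mass : solves_mass lam beta pi I rho z.
Proof.
move=> t It; have z_neq0 : z t != 0 by rewrite gt_eqF ?total_mass_gt0.
by apply: is_derive_eq (is_derive_total_mass t It) _; rewrite KLint_normalized //; field.
Qed.

End NormalizedSolution.
End HellingerKantorovich.

Theorem mainTheorem14 (R : realType) (d : nat)
    (lam : {measure set Rd R d -> \bar R}) (pi : 'rV[R]_d -> R)
    (alpha beta : R) (I : set R) :
  is_lebesgue lam ->
  (forall x, 0 < pi x) -> (forall x, differentiable pi x) ->
  0 < alpha -> 0 < beta -> open I ->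
  (* (i) *)
  (forall mu : R -> 'rV[R]_d -> R,
     decaying_density lam pi I mu ->
     solves_HK alpha beta pi I mu ->
     let z := fun t => intRd lam (mu t) in
     let rho := fun t x => mu t x / z t in
     (forall t, I t -> 0 < z t) /\
     solves_SHK lam alpha beta pi I rho /\
     solves_mass lam beta pi I rho z)
  /\
  (* (ii) *)
  (forall (rho : R -> 'rV[R]_d -> R) (kappa : R -> R),
     classical_density pi I rho ->
     (forall t, I t -> integrableRd lam (rho t) /\ intRd lam (rho t) = 1) ->
     solves_SHK lam alpha beta pi I rho ->
     (forall t, I t -> 0 < kappa t) ->
     solves_mass lam beta pi I rho kappa ->
     solves_HK alpha beta pi I (fun t x => kappa t * rho t x)).
Proof.
move=> lebesgue pi_gt0 _ _ _ _.
have lam_neq0 := is_lebesgue_setT_neq0 lebesgue.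
split=> [mu mu_decay mu_HK | rho kappa rho_classical _].
- split; [|split].
  + exact (total_mass_gt0 lam_neq0 mu_decay).
    exact (normalized_HK_solves_SHK pi_gt0 lam_neq0 mu_decay mu_HK).
  + exact (total_mass_solves_mass pi_gt0 lam_neq0 mu_decay mu_HK).
- exact (scaled_SHK_solves_HK pi_gt0 rho kappa rho_classical).
Qed.
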